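(* Couple the original redundancy system and the UB system described in the context so that they have the same arrival instants, types and job sizes, and assume $N_c(0)=N_c^{UB}(0)$ and $a_{cjs}(0)=a^{UB}_{cjs}(0)$ for all $c,j,s$. Then $N_c(t)\le N_c^{UB}(t)$ and $a_{cjs}(t)\ge a^{UB}_{cjs}(t)$ for all $c,j,s$ and all $t\ge0$.
   Context: Model: $K$ parallel servers $S=\{1,\ldots,K\}$ with capacities $\mu_k>0$, each serving its own queue by Processor Sharing (with $M_k$ copies present, each copy at server $k$ receives rate $\mu_k/M_k$). Jobs arrive by a Poisson process; each job independently is of type $c\subseteq S$ with probability $p_c$; $\mathcal C=\{c:p_c>0\}$, $\mathcal C(s)=\{c\in\mathcal C:s\in c\}$. Original (redundancy) system: a type-$c$ job sends identical copies (same size $b_{cj}$ for the $j$th type-$c$ job) to all servers of $c$ and departs as soon as one copy completes, the others being removed. Subsystems: $S_1=S$, $\mathcal C_1=\mathcal C$, $\mathcal C_i(s)=\mathcal C_i\cap\mathcal C(s)$, $\mathcal L_i=\arg\max_{s\in S_i}\frac{\mu_s}{\sum_{c\in\mathcal C_i(s)}p_c}$, $S_{i+1}=S\setminus\bigcup_{l\le i}\mathcal L_l$, $\mathcal C_{i+1}=\{c\in\mathcal C:c\subseteq S_{i+1}\}$; $\mathcal R(c)=\{s:\exists i,\ c\in\mathcal C_i(s),\ s\in\mathcal L_i\}$. UB system: same, except a type-$c$ job departs only when all its copies at servers in $\mathcal R(c)$ are fully served, upon which its remaining copies are removed. $N_c(t)$ ($N_c^{UB}(t)$) is the number of type-$c$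 jobs present at time $t$ in the original (UB) system, and $a_{cjs}(t)$ ($a^{UB}_{cjs}(t)$) the service attained at server $s$ by the copy of the $j$th type-$c$ job. Convention: if a job has already departed in the original system but not in the UB system, its attained service at all its servers in the original system is set equal to its size $b_{cj}$. *)

From HB Require Import structures.
From mathcomp Require Import all_boot all_order all_algebra.
From mathcomp Require Import reals.
Set Implicit Arguments. Unset Strict Implicit. Unset Printing Implicit Defensive.
Import Order.TTheory GRing.Theory Num.Theory.
Local Open Scope ring_scope.

Section Redundancy.
Variables (R : realType) (K : nat).
Variables (mu : 'I_K -> R) (p : {set 'I_K} -> R).

Definition Cset (S' : {set 'I_K}) : {set {set 'I_K}} :=
  [set c | (0 < p c) && (c \subset S')].

Definition load (S' : {set 'I_K}) (s : 'I_K) : R :=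
  \sum_(c in Cset S' | s \in c) p c.

(* L_i = argmax_{s in S_i} mu_s / load; a server with zero load has ratio +oo. *)
Definition Lset (S' : {set 'I_K}) : {set 'I_K} :=
  if [exists s in S', load S' s == 0]
  then [set s in S' | load S' s == 0]
  else [set s in S' | [forall s' in S', mu s' / load S' s' <= mu s / load S' s]].

(* S_0 = S (paper's S_1), S_{i+1} = S_i \ L_i  (= S \ U_{l<=i} L_l) *)
Fixpoint Sset (i : nat) : {set 'I_K} :=
  if i is i'.+1 then Sset i' :\: Lset (Sset i') else setT.

Definition inR (c : {set 'I_K}) (s : 'I_K) : Prop :=
  exists i : nat, [/\ c \in Cset (Sset i), s \in c & s \in Lset (Sset i)].

Definition card_eq (P : nat -> Prop) (n : nat) : Prop :=
  exists l : seq nat, [/\ uniq l, forall j, P j <-> j \in l & size l = n].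

Variables (typ : nat -> {set 'I_K}) (arr : nat -> R) (b : nat -> R).

(* a j s t : service attained at time t at server s by the copy of job j *)
Definition presentO (a : nat -> 'I_K -> R -> R) (j : nat) (t : R) : Prop :=
  arr j <= t /\ forall s, s \in typ j -> a j s t < b j.
Definition activeO (a : nat -> 'I_K -> R -> R) (j : nat) (s : 'I_K) (t : R) :=
  presentO a j t /\ s \in typ j.

Definition presentU (a : nat -> 'I_K -> R -> R) (j : nat) (t : R) : Prop :=
  arr j <= t /\ exists s, [/\ s \in typ j, inR (typ j) s & a j s t < b j].
Definition activeU (a : nat -> 'I_K -> R -> R) (j : nat) (s : 'I_K) (t : R) :=
  [/\ presentU a j t, s \in typ j & a j s t < b j].

Definition ps_rate (active : nat -> 'I_K -> R -> Prop) (j : nat) (s : 'I_K)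
    (t : R) (r : R) : Prop :=
  (active j s t -> forall m, card_eq (fun i => active i s t) m -> r = mu s / m%:R)
  /\ (~ active j s t -> r = 0).

Definition right_deriv (f : R -> R) (t r : R) : Prop :=
  forall e, 0 < e -> exists d, 0 < d /\
    forall h, 0 < h -> h < d -> `|(f (t + h) - f t) / h - r| < e.

Definition cont_from (f : R -> R) (t0 : R) : Prop :=
  forall t, t0 <= t -> forall e, 0 < e -> exists d, 0 < d /\
    forall u, t0 <= u -> `|u - t| < d -> `|f u - f t| < e.

Definition follows (active : (nat -> 'I_K -> R -> R) -> nat -> 'I_K -> R -> Prop)
    (a : nat -> 'I_K -> R -> R) : Prop :=
  forall j s, s \in typ j ->
    [/\ cont_from (a j s) (arr j),
        (forall t, arr j <= t -> exists r, ps_rate (active a) j s t r /\ right_deriv (a j s) t r)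
      & (0 < arr j -> a j s (arr j) = 0)].

End Redundancy.

From HB Require Import structures.
From mathcomp Require Import all_boot all_order all_algebra.
From mathcomp Require Import reals.
From mathcomp Require classical_sets.
From mathcomp Require Import ring lra.
From mathcomp Require Import boolp.
Set Implicit Arguments. Unset Strict Implicit. Unset Printing Implicit Defensive.
Import Order.TTheory GRing.Theory Num.Theory.
Local Open Scope ring_scope.

(* While a job is present in the original system, each of its copies has
   received at least as much service there as in the UB system, and no UB copy
   ever exceeds the job size.  This invariant makes every job present in the
   original system present in the UB system too: it still has an unfinished
   copy at a server of R(c), which is nonempty because the peeling of the
   subsystems eventually removes every server.  Hence at each server the active
   copies of the original system form a subset of those of the UB system, and
   processor sharing serves each original copy at least as fast.  Between
   arrivals and completions the active sets are constant, so services grow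
   linearly and the invariant propagates to the right; by continuity it passes
   to limits from the left, and a continuous induction on time concludes. *)

Section RightNeighbourhood.
Variable R : realType.
Implicit Types (u v x z : R) (P Q : R -> Prop).

Definition right_nbhs u P := exists2 d, 0 < d & forall v, u <= v -> v < u + d -> P v.

Lemma right_nbhs_and u P Q :
  right_nbhs u P -> right_nbhs u Q -> right_nbhs u (fun v => P v /\ Q v).
Proof.
move=> [d1 d1_gt0 HP] [d2 d2_gt0 HQ]; exists (Order.min d1 d2).
  by rewrite lt_min d1_gt0.
move=> v uv vd; have lt_d : forall d, Order.min d1 d2 <= d -> v < u + d.
  by move=> d md; apply: lt_le_trans vd _; rewrite lerD2l.
by split; [apply: HP | apply: HQ]; rewrite // lt_d // ge_min lexx ?orbT.
Qed.

Lemma right_nbhs_all (T : eqType) (l : seq T) u (P : T -> R -> Prop) :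
  (forall i, i \in l -> right_nbhs u (P i)) ->
  right_nbhs u (fun v => forall i, i \in l -> P i v).
Proof.
elim: l => [|j l IHl] Hl; first by exists 1 => // v _ _ i; rewrite in_nil.
have [d d_gt0 Hd] := right_nbhs_and (Hl j (mem_head _ _))
  (IHl (fun i il => Hl i (mem_behead (il : i \in behead (j :: l))))).
exists d => // v uv vd i; have [Pj Pl] := Hd v uv vd.
by rewrite in_cons => /predU1P[->|/Pl].
Qed.

Lemma real_induction P x z :
  P x ->
  (forall u, x < u -> u <= z -> (forall v, x <= v -> v < u -> P v) -> P u) ->
  (forall u, x <= u -> u < z -> (forall v, x <= v -> v <= u -> P v) ->
     right_nbhs u P) ->
  forall v, x <= v -> v <= z -> P v.
Proof.
move=> Px left right v xv vz.
pose E u := [/\ x <= u, u <= z & forall w, x <= w -> w <= u -> P w].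
have Ex : E x.
  split=> //; first exact: le_trans xv vz.
  by move=> w xw wx; have -> : w = x by apply/le_anti; rewrite wx xw.
have supE : classical_sets.has_sup E by split; [exists x | exists z => u []].
set s := sup E.
have xs : x <= s by apply: sup_upper_bound.
have sz : s <= z by apply: ge_sup => [|u []]; first by exists x.
have below : forall w, x <= w -> w < s -> P w.
  move=> w xw ws; have [e [_ _ Pe] we] := sup_gt (ex_intro _ x Ex) ws.
  by apply: Pe => //; exact: ltW.
have upto : forall w, x <= w -> w <= s -> P w.
  move=> w xw; rewrite le_eqVlt => /predU1P[->|]; last exact: below.
  have [xs'|] := ltrP x s; first exact: left.
  by move=> sx; have -> : s = x by apply/le_anti; rewrite sx xs.
suff zs : z <= s by apply: upto; rewrite // (le_trans vz zs).
rewrite leNgt; apply/negP => sz'.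
have [d d_gt0 Hd] := right s xs sz' upto.
pose w := Order.min (s + d / 2) z.
have Ew : E w.
  split=> [||y xy yw].
  - by rewrite le_min; apply/andP; split; lra.
  - by rewrite ge_min lexx orbT.
  - have [ys|sy] := lerP y s; first exact: upto.
    by apply: Hd; move: yw; rewrite le_min => /andP[]; lra.
have := sup_upper_bound supE Ew; rewrite -/s /w ge_min => /orP[]; lra.
Qed.

End RightNeighbourhood.

Section OneSidedCalculus.
Variable R : realType.
Implicit Types (f g : R -> R) (u v w x z c : R).

Lemma cont_from_cst x0 c : cont_from (fun=> c) x0.
Proof. by move=> t _ e e_gt0; exists 1; split=> // u _ _; rewrite subrr normr0. Qed.

Lemma cont_from_affine x0 x c r : cont_from (fun v => c + r * (v - x)) x0.
Proof.
move=> t _ e e_gt0; have r1_gt0 : 0 < `|r| + 1 by rewrite ltr_pwDr.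
exists (e / (`|r| + 1)); split=> [|u _ ut]; first by rewrite divr_gt0.
have -> : c + r * (u - x) - (c + r * (t - x)) = r * (u - t) by ring.
rewrite normrM; apply: (@le_lt_trans _ _ ((`|r| + 1) * `|u - t|)).
  by rewrite ler_wpM2r // lerDl.
by rewrite mulrC -ltr_pdivlMr.
Qed.

Lemma cont_fromN f x0 : cont_from f x0 -> cont_from (fun v => - f v) x0.
Proof.
move=> cf t x0t e e_gt0; have [d [d_gt0 Hd]] := cf t x0t e e_gt0.
by exists d; split=> // u x0u ut; rewrite -opprD normrN Hd.
Qed.

Lemma right_derivN f t r : right_deriv f t r -> right_deriv (fun v => - f v) t (- r).
Proof.
move=> df e e_gt0; have [d [d_gt0 Hd]] := df e e_gt0.
by exists d; split=> // h h_gt0 hd; rewrite -opprD mulNr -opprD normrN Hd.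
Qed.

Lemma cont_from_le_left f g x0 w u :
  cont_from f x0 -> cont_from g x0 -> x0 <= w -> w < u ->
  (forall v, w <= v -> v < u -> f v <= g v) -> f u <= g u.
Proof.
move=> cf cg x0w wu fg; rewrite leNgt; apply/negP => gf.
have e_gt0 : 0 < (f u - g u) / 2 by rewrite divr_gt0 // subr_gt0.
have x0u : x0 <= u by rewrite (le_trans x0w) // ltW.
have [d1 [d1_gt0 Hf]] := cf u x0u _ e_gt0.
have [d2 [d2_gt0 Hg]] := cg u x0u _ e_gt0.
pose d := Order.min d1 d2; pose v := Order.max w (u - d / 2).
have d_gt0 : 0 < d by rewrite lt_min d1_gt0.
have [dd1 dd2] : d <= d1 /\ d <= d2 by rewrite !ge_min !lexx ?orbT.
have wv : w <= v by rewrite le_max lexx.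
have vu : v < u by rewrite gt_max wu /=; lra.
have uv : `|v - u| < d.
  have : u - d / 2 <= v by rewrite le_max lexx orbT.
  by rewrite ltr_norml => ?; apply/andP; lra.
have := Hf v (le_trans x0w wv) (lt_le_trans uv dd1).
have := Hg v (le_trans x0w wv) (lt_le_trans uv dd2).
have := fg v wv vu; rewrite !ltr_norml; lra.
Qed.

Lemma cont_from_lt_right f x0 u c :
  cont_from f x0 -> x0 <= u -> f u < c -> right_nbhs u (fun v => f v < c).
Proof.
move=> cf x0u fuc; have e_gt0 : 0 < c - f u by rewrite subr_gt0.
have [d [d_gt0 Hd]] := cf u x0u _ e_gt0; exists d => // v uv vd.
have : `|v - u| < d by rewrite ger0_norm ?subr_ge0 //; lra.
by move/(Hd v (le_trans x0u uv)); rewrite ltr_norml; lra.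
Qed.

Lemma right_deriv_ge f x0 x z c :
  cont_from f x0 -> x0 <= x -> x <= z ->
  (forall u, x <= u -> u < z -> exists2 r, c <= r & right_deriv f u r) ->
  f x + c * (z - x) <= f z.
Proof.
move=> cf x0x; rewrite le_eqVlt => /predU1P[<- _|xz df].
  by rewrite subrr mulr0 addr0.
apply/ler_addgt0Pr => e e_gt0; pose k := e / (z - x).
have k_gt0 : 0 < k by rewrite divr_gt0 // subr_gt0.
have ek : k * (z - x) = e by rewrite divfK // subr_eq0 gt_eqF.
suff /(_ z (ltW xz) (lexx z)) : forall v, x <= v -> v <= z ->
    f x + (c - k) * (v - x) <= f v by rewrite mulrBl ek; lra.
apply: real_induction => [|u xu _ IH|u xu uz IH] /=.
- by rewrite subrr mulr0 addr0.
- apply: (@cont_from_le_left (fun v => f x + (c - k) * (v - x)) f x0 x u) => //.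
  exact: cont_from_affine.
- have [r cr dfu] := df u xu uz; have [d [d_gt0 Hd]] := dfu k k_gt0.
  exists d => // v; rewrite le_eqVlt => /predU1P[<- _|uv vd]; first exact: IH.
  have := Hd (v - u); rewrite subr_gt0 uv ltrBlDl => /(_ isT vd).
  have -> : u + (v - u) = v by ring.
  rewrite ltr_norml => /andP[slope _]; have Pu := IH u xu (lexx u).
  set q := (f v - f u) / (v - u) in slope.
  have dq : f v - f u = q * (v - u) by rewrite /q divfK // subr_eq0 gt_eqF.
  nra.
Qed.

Lemma right_deriv_le f x0 x z c :
  cont_from f x0 -> x0 <= x -> x <= z ->
  (forall u, x <= u -> u < z -> exists2 r, r <= c & right_deriv f u r) ->
  f z <= f x + c * (z - x).
Proof.
move=> cf x0x xz df; suff : - f x + - c * (z - x) <= - f z by lra.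
apply: (right_deriv_ge (cont_fromN cf) x0x xz) => u xu uz.
have [r rc dfu] := df u xu uz.
by exists (- r); [rewrite lerN2 | exact: right_derivN].
Qed.

End OneSidedCalculus.

Section Counting.
Implicit Types (P Q : nat -> Prop) (m n : nat).

Lemma card_eq_exists P n : (forall j, P j -> j < n)%N -> exists m, card_eq P m.
Proof.
move=> Pn; pose l := [seq j <- iota 0 n | `[< P j >]].
exists (size l), l; split=> //; first by rewrite filter_uniq ?iota_uniq.
move=> j; rewrite mem_filter mem_iota add0n /=.
by split=> [Pj|/andP[/asboolP //]]; rewrite asboolT ?Pn.
Qed.

Lemma card_eq_leq P Q m n :
  (forall j, P j -> Q j) -> card_eq P m -> card_eq Q n -> (m <= n)%N.
Proof.
move=> PQ [l [ul Pl <-]] [l' [ul' Ql' <-]].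
by apply: uniq_leq_size => // j /Pl /PQ /Ql'.
Qed.

Lemma card_eq_ext P Q m : (forall j, P j <-> Q j) -> card_eq P m -> card_eq Q m.
Proof. by move=> PQ [l [ul Pl <-]]; exists l; split=> // j; rewrite -PQ. Qed.

Lemma card_eq_gt0 P m j : P j -> card_eq P m -> (0 < m)%N.
Proof. by move=> Pj [l [_ /(_ j) [/(_ Pj) jl _] <-]]; case: l jl. Qed.

End Counting.

Section Subsystems.
Variables (R : realType) (K : nat) (mu : 'I_K -> R) (p : {set 'I_K} -> R).
Implicit Types (S c : {set 'I_K}) (s : 'I_K).

Lemma Lset_sub S : Lset mu p S \subset S.
Proof. by rewrite /Lset; case: ifP => _; rewrite setIdE subsetIl. Qed.

Lemma Lset_nonempty S (s0 : 'I_K) : s0 \in S -> exists s, s \in Lset mu p S.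
Proof.
move=> s0S; rewrite /Lset; case: ifP => [/existsP[s /andP[sS ls0]]|_].
  by exists s; rewrite inE sS ls0.
have [s sS smax] := @arg_maxP _ R _ s0 (mem S) (fun s => mu s / load p S s) s0S.
by exists s; rewrite inE; apply/andP; split=> //; apply/forall_inP.
Qed.

Lemma Sset_card i : (#|Sset mu p i| <= K - i)%N.
Proof.
elim: i => [|i IHi] /=; first by rewrite cardsT card_ord subn0.
have [->|[s0 s0S]] := set_0Vmem (Sset mu p i); first by rewrite set0D cards0.
have [s sL] := Lset_nonempty s0S.
have ltS : (#|Sset mu p i :\: Lset mu p (Sset mu p i)| < #|Sset mu p i|)%N.
  apply/proper_card/properP; split; first exact: subsetDl.
  by exists s; rewrite ?inE ?sL // (subsetP (Lset_sub _)).
by rewrite subnS -ltnS (leq_trans ltS) // (leq_trans IHi) // leqSpred.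
Qed.

Lemma inR_exists c : 0 < p c -> c != set0 -> exists2 s, s \in c & inR mu p c s.
Proof.
move=> pc_gt0 /set0Pn[s0 s0c]; apply: contrapT => noR.
have c_sub i : c \subset Sset mu p i.
  elim: i => [|i IHi] /=; first exact: subsetT.
  apply/subsetP => s sc; rewrite inE (subsetP IHi s sc) andbT.
  apply/negP => sL; apply: noR; exists s => //; exists i.
  by rewrite inE pc_gt0 IHi.
have := subsetP (c_sub K) s0 s0c.
by have := Sset_card K; rewrite subnn leqn0 cards_eq0 => /eqP->; rewrite inE.
Qed.

End Subsystems.

Section Status.
Variables (R : realType) (K : nat) (mu : 'I_K -> R) (p : {set 'I_K} -> R).
Variables (typ : nat -> {set 'I_K}) (arr b : nat -> R) (a : nat -> 'I_K -> R -> R).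

Definition same_status u w :=
  (forall i, arr i <= w <-> arr i <= u) /\
  (forall i s, s \in typ i -> arr i <= u -> (a i s w < b i <-> a i s u < b i)).

Variables (u w : R).
Hypothesis same : same_status u w.

Lemma presentO_same_status i : presentO typ arr b a i w <-> presentO typ arr b a i u.
Proof.
have [same_arr same_lt] := same; split=> -[ai unfinished].
  have iu := (same_arr i).1 ai.
  by split=> // s si; apply/(same_lt i s si iu)/unfinished.
by split=> [|s si]; [apply/same_arr | apply/(same_lt i s si ai)/unfinished].
Qed.

Lemma activeO_same_status i s : activeO typ arr b a i s w <-> activeO typ arr b a i s u.
Proof. by split=> -[pi si]; split=> //; apply/presentO_same_status. Qed.

Lemma presentU_same_status i :
  presentU mu p typ arr b a i w <-> presentU mu p typ arr b a i u.
Proof.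
have [same_arr same_lt] := same; split=> -[ai [s [si sR unfinished]]].
  have iu := (same_arr i).1 ai.
  by split=> //; exists s; split=> //; apply/(same_lt i s si iu).
split; first exact/same_arr.
by exists s; split=> //; apply/(same_lt i s si ai).
Qed.

Lemma activeU_same_status i s :
  activeU mu p typ arr b a i s w <-> activeU mu p typ arr b a i s u.
Proof.
have [_ same_lt] := same; split=> -[pi si unfinished].
  have pu := (presentU_same_status i).1 pi.
  by split=> //; apply/(same_lt i s si pu.1).
by split=> //; [exact/presentU_same_status | apply/(same_lt i s si pi.1)].
Qed.

End Status.

Section ProcessorSharing.
Variables (R : realType) (K : nat) (mu : 'I_K -> R).
Hypothesis mu_gt0 : forall s, 0 < mu s.
Implicit Types (A B : nat -> 'I_K -> R -> Prop).

Lemma ps_rate_ge0 A j s t r n :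
  (forall i, A i s t -> (i < n)%N) -> ps_rate mu A j s t r -> 0 <= r.
Proof.
move=> An [act nact]; have [Aj|nAj] := pselect (A j s t); last by rewrite nact.
by have [m Am] := card_eq_exists An; rewrite (act Aj m Am) divr_ge0 // ltW.
Qed.

Lemma ps_rate_ext A j s u w r r' n :
  (forall i, A i s w <-> A i s u) -> (forall i, A i s u -> (i < n)%N) ->
  ps_rate mu A j s w r -> ps_rate mu A j s u r' -> r = r'.
Proof.
move=> same An [act nact] [act' nact'].
have [Aj|nAj] := pselect (A j s u); last first.
  by rewrite nact ?nact' // => /same.
have [m Am] := card_eq_exists An.
have Am' : card_eq (fun i => A i s w) m by apply: card_eq_ext Am => i; rewrite same.
by rewrite (act (proj2 (same j) Aj) m Am') (act' Aj m Am).
Qed.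

Lemma ps_rate_le_sub A B j s t rA rB n :
  (forall i, A i s t -> B i s t) -> (forall i, B i s t -> (i < n)%N) -> A j s t ->
  ps_rate mu A j s t rA -> ps_rate mu B j s t rB -> rB <= rA.
Proof.
move=> AB Bn Aj [actA _] [actB _].
have [mA cA] := card_eq_exists (fun i Ai => Bn i (AB i Ai)).
have [mB cB] := card_eq_exists Bn.
have mAB := card_eq_leq AB cA cB; have mA_gt0 := card_eq_gt0 Aj cA.
rewrite (actA Aj mA cA) (actB (AB j Aj) mB cB) ler_pM2l //.
by rewrite lef_pV2 ?ler_nat // posrE ltr0n // (leq_trans mA_gt0).
Qed.

Section Trajectory.
Variables (typ : nat -> {set 'I_K}) (arr b : nat -> R).
Variable act : (nat -> 'I_K -> R -> R) -> nat -> 'I_K -> R -> Prop.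
Variable a : nat -> 'I_K -> R -> R.
Hypothesis arrivals_finite : forall t, exists n, forall j, arr j <= t -> (j < n)%N.
Hypothesis act_arrived : forall i s t, act a i s t -> arr i <= t.
Hypothesis a_follows : follows mu typ arr act a.

Lemma active_bounded s t : exists n, forall i, act a i s t -> (i < n)%N.
Proof. by have [n Hn] := arrivals_finite t; exists n => i /act_arrived /Hn. Qed.

Lemma follows_nondecreasing j s v w :
  s \in typ j -> arr j <= v -> v <= w -> a j s v <= a j s w.
Proof.
move=> sj jv vw; have [ca da _] := a_follows sj.
rewrite -[a j s v]addr0 -(mul0r (w - v)).
apply: (right_deriv_ge ca jv vw) => x vx xw.
have [r [rate dr]] := da x (le_trans jv vx); exists r => //.
by have [n An] := active_bounded s x; exact: ps_rate_ge0 An rate.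
Qed.

Lemma follows_affine j s u v :
  s \in typ j -> arr j <= u -> u <= v ->
  (forall w, u <= w -> w < v -> forall i, act a i s w <-> act a i s u) ->
  exists2 r, ps_rate mu (act a) j s u r & a j s v = a j s u + r * (v - u).
Proof.
move=> sj ju uv same; have [ca da _] := a_follows sj.
have [r [rate _]] := da u ju; exists r => //.
have [n An] := active_bounded s u.
have dr w : u <= w -> w < v -> right_deriv (a j s) w r.
  move=> uw wv; have [r' [rate' dr']] := da w (le_trans ju uw).
  by rewrite -(ps_rate_ext (same w uw wv) An rate' rate).
apply/le_anti/andP; split.
  by apply: (right_deriv_le ca ju uv) => w uw wv; exists r => //; exact: dr.
by apply: (right_deriv_ge ca ju uv) => w uw wv; exists r => //; exact: dr.
Qed.

Lemma arrivals_right_const u :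
  right_nbhs u (fun w => forall i, arr i <= w <-> arr i <= u).
Proof.
have [n Hn] := arrivals_finite (u + 1).
have near i : right_nbhs u (fun w => arr i <= w <-> arr i <= u).
  have [iu|ui] := lerP (arr i) u.
    by exists 1 => // w uw _; split=> // _; exact: le_trans iu uw.
  by exists (arr i - u) => [|w _ wi]; [rewrite subr_gt0 | split=> ?; lra].
have below : right_nbhs u (fun w => w < u + 1) by exists 1.
have [d d_gt0 Hd] :=
  right_nbhs_and (right_nbhs_all (fun i (_ : i \in iota 0 n) => near i)) below.
exists d => // w uw wd i; have [near_w wu1] := Hd w uw wd.
have [ilt|nle] := ltnP i n; first by apply: near_w; rewrite mem_iota.
have late : u + 1 < arr i by rewrite ltNge; apply/negP => /Hn; rewrite ltnNge nle.
by split=> ?; lra.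
Qed.

Lemma follows_lt_right_const u :
  right_nbhs u (fun w => forall i s, s \in typ i -> arr i <= u ->
    (a i s w < b i <-> a i s u < b i)).
Proof.
have [n Hn] := arrivals_finite u.
have near i s : right_nbhs u (fun w => s \in typ i -> arr i <= u ->
    (a i s w < b i <-> a i s u < b i)).
  have [[si iu]|nsi] := pselect (s \in typ i /\ arr i <= u); last first.
    by exists 1 => // w _ _ si iu; exfalso; exact: nsi.
  have [ca _ _] := a_follows si.
  have [lt|ge] := ltrP (a i s u) (b i).
    have [d d_gt0 Hd] := cont_from_lt_right ca iu lt.
    by exists d => // w uw wd _ _; split=> // _; exact: Hd.
  exists 1 => // w uw _ _ _; have := follows_nondecreasing si iu uw.
  by split=> ?; lra.
have [d d_gt0 Hd] := right_nbhs_all (fun i (_ : i \in iota 0 n) =>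
  right_nbhs_all (fun s (_ : s \in enum 'I_K) => near i s)).
exists d => // w uw wd i s si iu.
by apply: (Hd w uw wd) => //; rewrite ?mem_iota ?mem_enum ?Hn.
Qed.

Lemma follows_same_status_right u : right_nbhs u (same_status typ arr b a u).
Proof. exact: right_nbhs_and (arrivals_right_const u) (follows_lt_right_const u). Qed.

End Trajectory.
End ProcessorSharing.

Section Comparison.
Variables (R : realType) (K : nat) (mu : 'I_K -> R) (p : {set 'I_K} -> R).
Variables (typ : nat -> {set 'I_K}) (arr b : nat -> R) (aO aU : nat -> 'I_K -> R -> R).
Hypothesis mu_gt0 : forall s, 0 < mu s.
Hypothesis arr_ge0 : forall j, 0 <= arr j.
Hypothesis b_gt0 : forall j, 0 < b j.
Hypothesis typ_R : forall j, exists2 s, s \in typ j & inR mu p (typ j) s.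
Hypothesis arrivals_finite : forall t, exists n, forall j, arr j <= t -> (j < n)%N.
Hypothesis aO_follows : follows mu typ arr (activeO typ arr b) aO.
Hypothesis aU_follows : follows mu typ arr (activeU mu p typ arr b) aU.

Local Notation presO := (presentO typ arr b aO).
Local Notation presU := (presentU mu p typ arr b aU).
Local Notation actO := (activeO typ arr b aO).
Local Notation actU := (activeU mu p typ arr b aU).

Let actO_arrived i s t : actO i s t -> arr i <= t. Proof. by case=> -[]. Qed.
Let actU_arrived i s t : actU i s t -> arr i <= t. Proof. by case=> -[]. Qed.

Definition dominated t := forall j s, s \in typ j -> arr j <= t ->
  (presO j t -> aU j s t <= aO j s t) /\ aU j s t <= b j.

Lemma dominated_presentU t j : dominated t -> presO j t -> presU j t.
Proof.
move=> dom [jt unfinished]; split=> //; have [s sj sR] := typ_R j.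
exists s; split=> //.
exact: le_lt_trans ((dom j s sj jt).1 (conj jt unfinished)) (unfinished s sj).
Qed.

Lemma dominated_activeU t i s : dominated t -> actO i s t -> actU i s t.
Proof.
move=> dom [pi si]; split=> //; first exact: dominated_presentU.
exact: le_lt_trans ((dom i s si pi.1).1 pi) (pi.2 s si).
Qed.

Lemma dominated_rate_le t j s rO rU : dominated t -> actO j s t ->
  ps_rate mu actO j s t rO -> ps_rate mu actU j s t rU -> rU <= rO.
Proof.
move=> dom aj; have [n An] := active_bounded arrivals_finite actU_arrived s t.
exact: ps_rate_le_sub (fun i => dominated_activeU dom) An aj.
Qed.

Lemma dominated0 :
  (forall j s, arr j = 0 -> s \in typ j ->
     0 <= aO j s 0 <= b j /\ aO j s 0 = aU j s 0) ->
  dominated 0.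
Proof.
move=> init j s sj j0; have j00 : arr j = 0 by apply/le_anti; rewrite j0 arr_ge0.
by have [/andP[_ aOb] <-] := init j s j00 sj.
Qed.

Lemma dominated_left u :
  0 < u -> (forall v, 0 <= v -> v < u -> dominated v) -> dominated u.
Proof.
move=> u_gt0 dom j s sj; rewrite le_eqVlt => /predU1P[ju|ju].
  have [_ _ aO0] := aO_follows sj; have [_ _ aU0] := aU_follows sj.
  by rewrite -ju in u_gt0 *; rewrite aO0 // aU0 //; split=> //; exact: ltW.
have [cO _ _] := aO_follows sj; have [cU _ _] := aU_follows sj.
have dom_v v : arr j <= v -> v < u -> dominated v.
  by move=> jv vu; apply: dom; rewrite // (le_trans (arr_ge0 j)).
split=> [[_ unfinished]|].
  apply: (cont_from_le_left cU cO (lexx _) ju) => v jv vu.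
  apply: (dom_v v jv vu j s sj jv).1; split=> // s' s'j.
  apply: le_lt_trans (unfinished s' s'j).
  exact: (follows_nondecreasing mu_gt0 arrivals_finite actO_arrived aO_follows)
    s'j jv (ltW vu).
apply: (@cont_from_le_left _ (aU j s) (fun=> b j) _ (arr j) u cU) => //.
  exact: cont_from_cst.
by move=> v jv vu; exact: (dom_v v jv vu j s sj jv).2.
Qed.

Lemma dominated_right u : dominated u -> right_nbhs u dominated.
Proof.
move=> dom; have [d d_gt0 same] := right_nbhs_and
  (follows_same_status_right mu_gt0 b arrivals_finite actO_arrived aO_follows u)
  (follows_same_status_right mu_gt0 b arrivals_finite actU_arrived aU_follows u).
exists d => // v uv vd j s sj jv.
have [sameO sameU] := same v uv vd; have ju := (sameO.1 j).1 jv.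
have same_w w : u <= w -> w < v ->
    same_status typ arr b aO u w /\ same_status typ arr b aU u w.
  by move=> uw wv; apply: same => //; lra.
have [rO rateO ->] := follows_affine arrivals_finite actO_arrived aO_follows sj ju uv
  (fun w uw wv i => activeO_same_status (same_w w uw wv).1 i s).
have [rU rateU aUv] := follows_affine arrivals_finite actU_arrived aU_follows sj ju uv
  (fun w uw wv i => activeU_same_status mu p (same_w w uw wv).2 i s).
have [domO domU] := dom j s sj ju; split.
  move=> /(presentO_same_status sameO) pju.
  have rUO := dominated_rate_le dom (conj pju sj) rateO rateU.
  by rewrite aUv lerD ?domO // ler_wpM2r // subr_ge0.
have [lt|ge] := ltrP (aU j s u) (b j); first exact/ltW/(sameU.2 j s sj ju).
have nact : ~ actU j s u by case=> _ _; rewrite ltNge ge.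
by rewrite aUv (rateU.2 nact) mul0r addr0.
Qed.

Lemma dominated_propagates : dominated 0 -> forall t, 0 <= t -> dominated t.
Proof.
move=> dom0 t t_ge0; apply: (real_induction (x := 0) (z := t)) => //.
- by move=> u u_gt0 _ IH; apply: dominated_left.
- by move=> u u_ge0 _ IH; apply: dominated_right; exact: IH u_ge0 (lexx u).
Qed.

End Comparison.

Theorem proposition3 (R : realType) (K : nat) (mu : 'I_K -> R) (p : {set 'I_K} -> R)
    (typ : nat -> {set 'I_K}) (arr : nat -> R) (b : nat -> R)
    (aO aU : nat -> 'I_K -> R -> R) :
  (* model parameters *)
  (forall s, 0 < mu s) ->
  (forall c, 0 <= p c) -> \sum_(c : {set 'I_K}) p c = 1 -> p set0 = 0 ->
  (* coupled arrival instants, types and sizes (shared by both systems) *)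
  (forall j, 0 <= arr j) -> (forall j, 0 < p (typ j)) -> (forall j, 0 < b j) ->
  (forall t, exists n, forall j, arr j <= t -> (j < n)%N) ->
  (* aO follows the original redundancy dynamics, aU the UB dynamics *)
  follows mu typ arr (activeO typ arr b) aO ->
  follows mu typ arr (activeU mu p typ arr b) aU ->
  (* equal initial conditions *)
  (forall j s, arr j = 0 -> s \in typ j ->
     0 <= aO j s 0 <= b j /\ aO j s 0 = aU j s 0) ->
  (forall c, exists n,
     card_eq (fun j => typ j = c /\ presentO typ arr b aO j 0) n /\
     card_eq (fun j => typ j = c /\ presentU mu p typ arr b aU j 0) n) ->
  forall t, 0 <= t ->
    (forall c nO nU,
       card_eq (fun j => typ j = c /\ presentO typ arr b aO j t) nO ->
       card_eq (fun j => typ j = c /\ presentU mu p typ arr b aU j t) nU ->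
       (nO <= nU)%N) /\
    (forall j s, s \in typ j -> arr j <= t ->
       (presentO typ arr b aO j t -> aU j s t <= aO j s t) /\
       (~ presentO typ arr b aO j t -> aU j s t <= b j)).
Proof.
move=> mu_gt0 _ _ p_set0 arr_ge0 p_typ b_gt0 arrivals_finite aO_follows aU_follows
  init _ t t_ge0.
have typ_R j : exists2 s, s \in typ j & inR mu p (typ j) s.
  by apply: inR_exists => //; apply: contraTneq (p_typ j) => ->; rewrite p_set0 ltxx.
have dom := dominated_propagates mu_gt0 arr_ge0 b_gt0 typ_R arrivals_finite
  aO_follows aU_follows (dominated0 arr_ge0 init) t_ge0.
split=> [c nO nU cO cU|j s sj jt].
  apply: card_eq_leq cO cU => j [tj pj]; split=> //.
  exact: (dominated_presentU (t := t) typ_R dom pj).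
by have [aU_aO aU_b] := dom j s sj jt; split=> // _.
Qed.
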